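(* Let $G$ be a finite group and $H$ a subgroup such that $\mathcal{O}_G(H)$ is Boolean. If there are $K,L\in\mathcal{O}_G(H)$ with $K<L$ and $|L:K|=2$, then there is an atom $A$ of $\mathcal{O}_G(H)$ such that $L=K\vee A$ and $|G:A^{\complement}|=2$.
   Context: $\mathcal{O}_G(H)=\{K\mid H\le K\le G\}$ with $\vee$ the subgroup generated; Boolean means isomorphic to the lattice of subsets of a finite set. An atom is a minimal element of $\mathcal{O}_G(H)\setminus\{H\}$; $A^{\complement}$ is the lattice complement of $A$ (so $A\wedge A^{\complement}=H$, $A\vee A^{\complement}=G$). *)

From mathcomp Require Import all_boot all_fingroup.
Set Implicit Arguments. Unset Strict Implicit. Unset Printing Implicit Defensive.
Local Open Scope group_scope.

Definition in_interval (gT : finGroupType) (G H K : {group gT}) : bool :=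
  (H \subset K) && (K \subset G).

(* O_G(H) is Boolean: order-isomorphic (hence lattice-isomorphic) to the
   lattice of subsets of a finite set, here {0,...,n-1}. *)
Definition boolean_interval (gT : finGroupType) (G H : {group gT}) : Prop :=
  exists n : nat, exists f : {group gT} -> {set 'I_n},
    (forall K L : {group gT}, in_interval G H K -> in_interval G H L ->
        (K \subset L) = (f K \subset f L)) /\
    (forall S : {set 'I_n}, exists K : {group gT}, in_interval G H K /\ f K = S).

Definition is_atom (gT : finGroupType) (G H A : {group gT}) : Prop :=
  [/\ in_interval G H A, A :!=: H &
      forall B : {group gT}, in_interval G H B -> B :!=: H ->
        B \subset A -> B :=: A].

Definition is_complement (gT : finGroupType) (G H A C : {group gT}) : Prop :=
  [/\ in_interval G H C, A :&: C = H & A <*> C = G].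

From mathcomp Require Import all_boot all_fingroup.
From mathcomp Require Import gseries maximal.
Set Implicit Arguments.
Unset Strict Implicit.
Unset Printing Implicit Defensive.
Local Open Scope group_scope.

(* Work through the order isomorphism f of O_G(H) onto the subsets of
   {0,...,n-1}, which turns meets and joins into intersections and unions.
   A point i of f L outside f K gives the atom A = f^-1 {i} and its
   complement C = f^-1 (~ {i}); L = K <*> A since K, of prime index, is
   maximal in L. For x in L, the conjugate C^x still contains K (normal in L),
   hence lies in O_G(H); it cannot contain A, or it would contain L and so
   would C. Thus C^x lies below C, i.e. L normalizes C. Then C L = G and
   C :&: L = K, so |G : C| = |L : C :&: L| = |L : K| = 2. *)

Lemma index2_between (gT : finGroupType) (K L M : {group gT}) :
  #|L : K| = 2 -> K \subset M -> M \subset L -> M :=: K \/ M :=: L.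
Proof.
move=> iLK sKM sML.
have /maxgroupP[_ maxK] : maximal K L.
  by apply: p_index_maximal; rewrite ?iLK // (subset_trans sKM sML).
by have [-> | ltML] := eqVproper sML; [right | left; apply: maxK].
Qed.

Lemma index2_joinE (gT : finGroupType) (K L A : {group gT}) :
  K \subset L -> #|L : K| = 2 -> A \subset L -> ~~ (A \subset K) ->
  L :=: K <*> A.
Proof.
move=> sKL iLK sAL nsAK.
have sKAL : K <*> A \subset L by rewrite join_subG sKL sAL.
have [defK | ->] // := index2_between iLK (joing_subl K A) sKAL.
by case/negP: nsAK; rewrite -defK joing_subr.
Qed.

Lemma index2_meetE (gT : finGroupType) (K L C : {group gT}) :
  K \subset L -> #|L : K| = 2 -> K \subset C -> ~~ (L \subset C) ->
  C :&: L = K.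
Proof.
move=> sKL iLK sKC nsLC.
have sKCL : K \subset C :&: L by rewrite subsetI sKC sKL.
have [-> // | defL] := index2_between iLK sKCL (subsetIr C L).
by case/negP: nsLC; rewrite -defL subsetIl.
Qed.

Lemma index_norm_join (gT : finGroupType) (C L : {group gT}) :
  L \subset 'N(C) -> #|C <*> L : C| = #|L : C :&: L|.
Proof. by move=> nCL; rewrite norm_joinEr // indexMg setIC indexgI. Qed.

Section BooleanInterval.

Context {gT : finGroupType} {G H : {group gT}} {n : nat}.
Context {f : {group gT} -> {set 'I_n}}.
Local Notation inI := (in_interval G H).

Hypothesis sHG : H \subset G.
Hypothesis f_mono : forall K L : {group gT}, inI K -> inI L ->
  (K \subset L) = (f K \subset f L).
Hypothesis f_onto :
  forall S : {set 'I_n}, exists K : {group gT}, inI K /\ f K = S.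

Lemma interval_bot : inI H.
Proof. by rewrite /in_interval subxx sHG. Qed.

Lemma interval_top : inI G.
Proof. by rewrite /in_interval subxx sHG. Qed.

Lemma intervalI (A B : {group gT}) : inI A -> inI B -> inI (A :&: B)%G.
Proof.
case/andP=> sHA sAG /andP[sHB _].
by rewrite /in_interval subsetI sHA sHB (subset_trans (subsetIl A B) sAG).
Qed.

Lemma intervalY (A B : {group gT}) : inI A -> inI B -> inI (A <*> B)%G.
Proof.
case/andP=> sHA sAG /andP[_ sBG].
by rewrite /in_interval join_subG sAG sBG (subset_trans sHA (joing_subl A B)).
Qed.

Lemma f_inj (K L : {group gT}) : inI K -> inI L -> f K = f L -> K :=: L.
Proof.
by move=> iK iL fKL; apply/eqP; rewrite eqEsubset !f_mono // fKL subxx.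
Qed.

Lemma f_bot : f H = set0.
Proof.
have [K [iK fK]] := f_onto set0.
by apply/eqP; rewrite -subset0 -fK -f_mono ?interval_bot //; case/andP: iK.
Qed.

Lemma f_top : f G = setT.
Proof.
have [K [iK fK]] := f_onto setT.
by apply/eqP; rewrite -subTset -fK -f_mono ?interval_top //; case/andP: iK.
Qed.

Lemma f_meet (A B : {group gT}) : inI A -> inI B ->
  f (A :&: B)%G = f A :&: f B.
Proof.
move=> iA iB; have iAB := intervalI iA iB.
have [X [iX fX]] := f_onto (f A :&: f B).
apply/eqP; rewrite eqEsubset subsetI -!f_mono ?subsetIl ?subsetIr //=.
by rewrite -fX -f_mono // subsetI !f_mono // fX subsetIl subsetIr.
Qed.

Lemma f_join (A B : {group gT}) : inI A -> inI B ->
  f (A <*> B)%G = f A :|: f B.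
Proof.
move=> iA iB; have iAB := intervalY iA iB.
have [X [iX fX]] := f_onto (f A :|: f B).
apply/eqP; rewrite eqEsubset subUset -!f_mono ?joing_subl ?joing_subr //= andbT.
by rewrite -fX -f_mono // join_subG !f_mono // fX subsetUl subsetUr.
Qed.

Lemma singleton_atom (A : {group gT}) (i : 'I_n) :
  inI A -> f A = [set i] -> is_atom G H A.
Proof.
move=> iA fA; split=> //.
  have nsAH : ~~ (A \subset H).
    by rewrite f_mono ?interval_bot // fA f_bot sub1set inE.
  by apply: contraNneq nsAH => ->.
move=> B iB nBH sBA.
have : f B \subset [set i] by rewrite -fA -f_mono.
rewrite subset1 => /orP[/eqP fB | /eqP fB0].
  by apply: f_inj; rewrite // fA.
by case/eqP: nBH; apply: f_inj; rewrite ?interval_bot // fB0 f_bot.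
Qed.

Lemma singleton_complement (A C : {group gT}) (i : 'I_n) :
  inI A -> inI C -> f A = [set i] -> f C = ~: [set i] -> is_complement G H A C.
Proof.
move=> iA iC fA fC; split=> //.
  apply: f_inj (intervalI iA iC) interval_bot _.
  by rewrite f_meet // fA fC setICr f_bot.
apply: f_inj (intervalY iA iC) interval_top _.
by rewrite f_join // fA fC setUCr f_top.
Qed.

Section Index2.

Context {K L A C : {group gT}} {i : 'I_n}.
Hypotheses (iK : inI K) (iL : inI L) (iA : inI A) (iC : inI C).
Hypotheses (sKL : K \subset L) (iLK : #|L : K| = 2).
Hypotheses (fLi : i \in f L) (fKi : i \notin f K).
Hypotheses (fA : f A = [set i]) (fC : f C = ~: [set i]).

Lemma sub_coatom (X : {group gT}) : inI X -> i \notin f X -> X \subset C.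
Proof.
move=> iX fXi; rewrite f_mono // fC; apply/subsetP => j fXj.
by rewrite !inE; apply: contraTneq fXj => ->.
Qed.

Lemma atom_subL : A \subset L.
Proof. by rewrite f_mono // fA sub1set. Qed.

Lemma atom_not_subK : ~~ (A \subset K).
Proof. by rewrite f_mono // fA sub1set. Qed.

Lemma L_not_sub_coatom : ~~ (L \subset C).
Proof.
apply/negP => /(subset_trans atom_subL).
by rewrite f_mono // fA fC sub1set !inE eqxx.
Qed.

Lemma atom_join : L :=: K <*> A.
Proof. exact: index2_joinE sKL iLK atom_subL atom_not_subK. Qed.

Lemma coatom_norm : L \subset 'N(C).
Proof.
have [/andP[sHK _] /andP[_ sLG]] := (iK, iL).
have sKC : K \subset C by apply: sub_coatom.
apply/normsP => x Lx.
have KxK : K :^ x = K by apply: (normsP (normal_norm (index2_normal sKL iLK))).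
have sKCx : K \subset C :^ x by rewrite -KxK conjSg.
have iCx : inI (C :^ x)%G.
  rewrite /in_interval (subset_trans sHK sKCx) conj_subG ?(subsetP sLG) //.
  by case/andP: iC.
have sCxC : C :^ x \subset C.
  apply: sub_coatom => //; apply/negP => Cxi.
  have sACx : A \subset C :^ x by rewrite f_mono // fA sub1set.
  case/negP: L_not_sub_coatom.
  by rewrite -(conjSg _ _ x) conjGid // atom_join join_subG sKCx sACx.
by apply/eqP; rewrite eqEcard sCxC cardJg leqnn.
Qed.

Lemma coatom_index : #|G : C| = 2.
Proof.
have [/andP[_ sLG] /andP[_ sCG]] := (iL, iC).
have defG : C <*> L = G.
  have [_ _ defG] := singleton_complement iA iC fA fC.
  apply/eqP; rewrite eqEsubset join_subG sCG sLG -{1}defG join_subG joing_subl.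
  by rewrite (subset_trans atom_subL) ?joing_subr.
have sKC : K \subset C by apply: sub_coatom.
rewrite -defG index_norm_join ?coatom_norm //.
by rewrite (index2_meetE sKL iLK sKC L_not_sub_coatom).
Qed.

Lemma atom_coatom_index2 :
  [/\ is_atom G H A, L :=: K <*> A, is_complement G H A C & #|G : C| = 2].
Proof.
split; first exact: singleton_atom iA fA.
- exact: atom_join.
- exact: singleton_complement iA iC fA fC.
- exact: coatom_index.
Qed.

End Index2.

End BooleanInterval.

Theorem lemma10p8 (gT : finGroupType) (G H K L : {group gT}) :
  H \subset G ->
  boolean_interval G H ->
  in_interval G H K -> in_interval G H L ->
  K \proper L -> #|L : K| = 2 ->
  exists A : {group gT}, exists C : {group gT},
    [/\ is_atom G H A, L :=: K <*> A, is_complement G H A C & #|G : C| = 2].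
Proof.
move=> sHG [n [f [f_mono f_onto]]] iK iL /andP[sKL nsLK] iLK.
have [i fLi fKi] : exists2 i, i \in f L & i \notin f K.
  by apply/subsetPn; rewrite -f_mono.
have [A [iA fA]] := f_onto [set i].
have [C [iC fC]] := f_onto (~: [set i]).
exists A, C.
exact (atom_coatom_index2 sHG f_mono f_onto iK iL iA iC sKL iLK fLi fKi fA fC).
Qed.
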